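(* For any real continuous function $f\in C(\Omega)$, if $\|[\mathcal D,\pi(M_f)]\|\le1$ then $|Kf-f|\le 1$ and $|Lf-f|\le 1$, where $|\cdot|$ is the $L^2(\mu)$ norm.
   Context: $\Omega=\{0,1\}^{\mathbb N}$ with the shift $\sigma$; for $a\in\{0,1\}$, $ax=(a,x_1,\dots)$. $\mu$ is the measure of maximal entropy (uniform Bernoulli product measure), $L^2(\mu)$ the Hilbert space of square-integrable functions. Ruelle operator $L\phi(x)=\frac12(\phi(0x)+\phi(1x))$; Koopman operator $K\phi=\phi\circ\sigma$. $M_f$ is multiplication $g\mapsto fg$. On $\mathcal H=L^2(\mu)\times L^2(\mu)$ (norm $|(\phi_1,\phi_2)|^2=|\phi_1|^2+|\phi_2|^2$), $\mathcal D=\begin{pmatrix}0&K\\ L&0\end{pmatrix}$, $\pi(A)=\begin{pmatrix}A&0\\0&A\end{pmatrix}$, $[\mathcal D,\pi(A)]=\mathcal D\pi(A)-\pi(A)\mathcal D$; $\|\cdot\|$ is the operator norm. *)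

From HB Require Import structures.
From mathcomp Require Import all_boot all_order all_algebra.
From mathcomp Require Import all_classical all_reals all_analysis.
Set Implicit Arguments. Unset Strict Implicit. Unset Printing Implicit Defensive.
Import Order.TTheory GRing.Theory Num.Theory.
Import numFieldTopology.Exports numFieldNormedType.Exports.
Local Open Scope classical_set_scope.
Local Open Scope ring_scope.

(* Omega = {0,1}^N, points are x : nat -> bool, x i = x_{i+1}. *)
Definition cylinder (n : nat) (w : nat -> bool) : set cantor_space :=
  [set x | forall i, (i < n)%N -> x i = w i].

Definition cylinders : set (set cantor_space) :=
  [set A | exists n w, A = cylinder n w].

(* Omega as a measurable space: the sigma-algebra generated by cylinders
   (= the product / Borel sigma-algebra of the Cantor space). *)
Definition Omega := g_sigma_algebraType cylinders.

(* mu is the uniform Bernoulli product measure (measure of maximal entropy):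
   it is characterized by its values on cylinders. *)
Definition is_mme (R : realType) (mu : {measure set Omega -> \bar R}) : Prop :=
  forall n w, mu (cylinder n w) = ((2 ^- n)%:E)%E.

Definition shift (x : cantor_space) : cantor_space := fun i => x i.+1.
Definition pre (a : bool) (x : cantor_space) : cantor_space :=
  fun i => if i is j.+1 then x j else a.

Section Ops.
Variable R : realType.
Local Notation fn := (cantor_space -> R).

Definition Koop (phi : fn) : fn := fun x => phi (shift x).
Definition Ruelle (phi : fn) : fn :=
  fun x => 2^-1 * (phi (pre false x) + phi (pre true x)).
Definition Mul (f : fn) (g : fn) : fn := fun x => f x * g x.

(* operators on H = L^2 x L^2, acting on pairs of functions *)
Definition Dop (p : fn * fn) : fn * fn := (Koop p.2, Ruelle p.1).
Definition piop (A : fn -> fn) (p : fn * fn) : fn * fn := (A p.1, A p.2).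
Definition commut (A : fn -> fn) (p : fn * fn) : fn * fn :=
  let u := Dop (piop A p) in let v := piop A (Dop p) in
  (fun x => u.1 x - v.1 x, fun x => u.2 x - v.2 x).

Definition L2sq (mu : {measure set Omega -> \bar R}) (g : fn) : \bar R :=
  (\int[mu]_(x in [set: Omega]) ((g x) ^+ 2)%:E)%E.

Definition inL2 (mu : {measure set Omega -> \bar R}) (g : fn) : Prop :=
  measurable_fun [set: Omega] (g : Omega -> R) /\ (L2sq mu g < +oo)%E.

Definition Hsq (mu : {measure set Omega -> \bar R}) (p : fn * fn) : \bar R :=
  (L2sq mu p.1 + L2sq mu p.2)%E.

Definition opnorm_le (mu : {measure set Omega -> \bar R})
  (T : fn * fn -> fn * fn) (c : R) : Prop :=
  forall p, inL2 mu p.1 -> inL2 mu p.2 ->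
    (Hsq mu (T p) <= (c ^+ 2)%:E * Hsq mu p)%E.
End Ops.

From HB Require Import structures.
From mathcomp Require Import all_boot all_order all_algebra.
From mathcomp Require Import all_classical all_reals all_analysis.
From mathcomp Require Import ring lra.
Set Implicit Arguments. Unset Strict Implicit. Unset Printing Implicit Defensive.
Import Order.TTheory GRing.Theory Num.Theory.
Import numFieldTopology.Exports.
Local Open Scope classical_set_scope.
Local Open Scope ring_scope.

(* Test the commutator on the constant pairs (0, 1) and (1, 0).  Since K1 = L1 = 1,
   [D, pi(M_f)] maps them to (Kf - f, 0) and (0, Lf - f), while both pairs have
   norm 1 because mu is a probability measure. *)

Section ConstantTests.
Variable R : realType.
Implicit Types (f : cantor_space -> R) (c : R).

Lemma Ruelle_cst c : Ruelle (cst c) = cst c.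
Proof. by apply/funext => x; rewrite /Ruelle /=; lra. Qed.

Lemma commut_Mul_cst01 f :
  commut (Mul f) (cst 0, cst 1) = (fun x => Koop f x - f x, cst 0).
Proof.
by congr pair; apply/funext => x;
  rewrite /commut /Dop /piop /Mul /Koop /Ruelle /=; ring.
Qed.

Lemma commut_Mul_cst10 f :
  commut (Mul f) (cst 1, cst 0) = (cst 0, fun x => Ruelle f x - f x).
Proof.
rewrite /commut /Dop /piop /=; congr pair; apply/funext => x.
  by rewrite /Mul /Koop /=; ring.
by rewrite Ruelle_cst /Mul /Ruelle /=; ring.
Qed.

Variable mu : {measure set Omega -> \bar R}.

Lemma L2sq_cst c : L2sq mu (cst c) = ((c ^+ 2)%:E * mu [set: Omega])%E.
Proof. by rewrite /L2sq -integral_cst. Qed.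

Lemma mme_setT : is_mme mu -> mu [set: Omega] = 1%E.
Proof.
move=> Hmu.
have -> : [set: Omega] = cylinder 0 (fun _ => false) by apply/seteqP; split.
by rewrite Hmu invr1.
Qed.

Lemma inL2_cst c : (mu [set: Omega] < +oo)%E -> inL2 mu (cst c).
Proof.
move=> mu_fin; split; first exact: measurable_cst.
by rewrite L2sq_cst lte_mul_pinfty ?lee_fin ?sqr_ge0.
Qed.

End ConstantTests.

Theorem lemma2p19 (R : realType) (mu : {measure set Omega -> \bar R})
  (Hmu : is_mme mu) (f : cantor_space -> R) (Hf : continuous f) :
  opnorm_le mu (commut (Mul f)) 1 ->
  (L2sq mu (fun x => (Koop f x - f x)%R) <= 1%:E)%E /\
  (L2sq mu (fun x => (Ruelle f x - f x)%R) <= 1%:E)%E.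
Proof.
move=> commut_le1.
have mu1 := mme_setT Hmu.
have inL2c c : inL2 mu (cst c) by apply: inL2_cst; rewrite mu1 ltry.
have L2sq_c c : L2sq mu (cst c) = (c ^+ 2)%:E by rewrite L2sq_cst mu1 mule1.
split.
- have := commut_le1 (cst 0, cst 1) (inL2c 0) (inL2c 1).
  rewrite commut_Mul_cst01 /Hsq !L2sq_c expr0n expr1n mul1e add0e adde0; apply.
- have := commut_le1 (cst 1, cst 0) (inL2c 1) (inL2c 0).
  rewrite commut_Mul_cst10 /Hsq !L2sq_c expr0n expr1n mul1e add0e adde0; apply.
Qed.
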